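(* Let $G$ be a planar graph with a fixed plane embedding and coloring $\sigma$ such that $(G,\sigma)$ is color-connected, and let $(G^*,\sigma)$ be the colored dual graph. Then $(G^*,\sigma)$ is color-connected, i.e. for every color $c$ the set of dual vertices $v^*$ with $c\in\sigma(v^* )$ induces a connected subgraph of $G^*$.
   Context: $\sigma:V\to 2^{[m]}$; $(G,\sigma)$ is color-connected if for each color $c$ the vertices of $G$ whose color set contains $c$ induce a connected subgraph. $G^*$ is the planar dual of the embedded $G$ (one vertex per face, one dual edge $e^*$ crossing each edge $e$). Colored dual: for an edge $e=uv$ of $G$, $\sigma(e)=\sigma(u)\cup\sigma(v)$ and $\sigma(e^* )=\sigma(e)$; for a dual vertex $v^*$, $\sigma(v^* )$ is the union of $\sigma(e^* )$ over all dual edges $e^*$ incident to $v^*$ (equivalently, the union of $\sigma(v)$ over the vertices $v$ on the boundary of the corresponding face). *)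

From mathcomp Require Import all_boot all_order.
From mathcomp Require Import fingroup perm.
Set Implicit Arguments. Unset Strict Implicit. Unset Printing Implicit Defensive.

(* A plane embedding of a graph, given combinatorially by a rotation system
   (combinatorial map): darts D, each dart d has a tail vertex [tail d];
   [alpha] is the fixed-point-free involution pairing the two darts of an
   edge; [rho] is the cyclic order (rotation) of darts around each vertex. *)
Section Map.
Variables (V D : finType) (tail : D -> V) (alpha : D -> D) (rho : {perm D}).

Definition gadj : rel V := fun u v => [exists d, (tail d == u) && (tail (alpha d) == v)].

Definition phi (d : D) : D := rho (alpha d).
Definition face (d : D) : {set D} := [set e | fconnect phi d e].
Definition faces : {set {set D}} := [set face d | d : D].

Definition rotation_system : Prop :=
  [/\ forall d, alpha (alpha d) = d,
      forall d, alpha d != d,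
      forall d, tail (rho d) = tail d &
      forall d e, tail d = tail e -> fconnect rho d e].

Definition simple_map : Prop :=
  (forall d, tail (alpha d) != tail d) /\
  (forall d e, tail d = tail e -> tail (alpha d) = tail (alpha e) -> d = e).

Definition connected_graph : Prop := forall u v : V, connect gadj u v.

(* genus 0 : Euler's formula V - E + F = 2 (E = #|D| / 2) *)
Definition genus0 : Prop := #|V| + #|faces| = #|D| %/ 2 + 2.

Definition plane_map : Prop := [/\ rotation_system, simple_map, connected_graph & genus0].

Variable m : nat.
Variable sigma : V -> {set 'I_m}.

Definition sigma_edge (d : D) : {set 'I_m} := sigma (tail d) :|: sigma (tail (alpha d)).

Definition color_connected : Prop :=
  forall c : 'I_m, forall u v : V, c \in sigma u -> c \in sigma v ->
    connect (fun x y => [&& c \in sigma x, c \in sigma y & gadj x y]) u v.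

(* dual graph: vertices = faces; one dual edge (crossing the edge of d)
   joins face d and face (alpha d) *)
Definition dadj : rel {set D} :=
  fun f g => [exists d, (face d == f) && (face (alpha d) == g)].

Definition sigma_dual (f : {set D}) : {set 'I_m} :=
  \bigcup_(d in D | face d == f) sigma_edge d.

Definition dual_color_connected : Prop :=
  forall c : 'I_m, forall f g : {set D}, f \in faces -> g \in faces ->
    c \in sigma_dual f -> c \in sigma_dual g ->
    connect (fun x y => [&& x \in faces, y \in faces,
                            c \in sigma_dual x, c \in sigma_dual y & dadj x y]) f g.
End Map.

From mathcomp Require Import all_boot all_order.
From mathcomp Require Import fingroup perm.
Set Implicit Arguments. Unset Strict Implicit. Unset Printing Implicit Defensive.

(* Fix a color c. A dart d whose tail carries c makes face d a c-colored dual
   vertex, and so does a dart whose head carries c. Turning around a vertex by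
   rho moves from face d to face (rho d) = face (alpha d), which is a dual edge,
   and crossing the edge of d is the dual edge (face d, face (alpha d)). So all
   faces at the darts of a c-colored path of G lie in one c-colored component
   of the dual, and every c-colored face contains such a dart. *)

Section ColoredDual.
Variables (V D : finType) (tail : D -> V) (alpha : D -> D) (rho : {perm D}).
Variables (m : nat) (sigma : V -> {set 'I_m}).
Hypothesis alphaK : involutive alpha.
Hypothesis tail_rho : forall d, tail (rho d) = tail d.
Hypothesis rho_around_vertex : forall d e, tail d = tail e -> fconnect rho d e.

Local Notation face := (face alpha rho).
Local Notation faces := (faces alpha rho).
Local Notation dadj := (dadj alpha rho).
Local Notation sigma_edge := (sigma_edge tail alpha sigma).
Local Notation sigma_dual := (sigma_dual tail alpha rho sigma).

Lemma phi_inj : injective (phi alpha rho).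
Proof. exact: inj_comp perm_inj (inv_inj alphaK). Qed.

Lemma face_phi d : face (phi alpha rho d) = face d.
Proof. by apply/setP=> e; rewrite !inE -same_fconnect1 //; apply: phi_inj. Qed.

Lemma face_rho d : face (rho d) = face (alpha d).
Proof. by rewrite -[RHS]face_phi /phi alphaK. Qed.

Lemma face_in_faces d : face d \in faces.
Proof. exact: imset_f. Qed.

Lemma dadj_face_alpha d : dadj (face d) (face (alpha d)).
Proof. by apply/existsP; exists d; rewrite !eqxx. Qed.

Lemma dadj_sym : symmetric dadj.
Proof.
suff dadjC f g : dadj f g -> dadj g f by move=> f g; apply/idP/idP; apply: dadjC.
by case/existsP=> d /andP[/eqP <- /eqP <-]; rewrite -{2}(alphaK d) dadj_face_alpha.
Qed.

Lemma sigma_edge_sub_dual d : sigma_edge d \subset sigma_dual (face d).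
Proof. by apply: (bigcup_sup d); rewrite eqxx. Qed.

Lemma sigma_dualP f c :
  reflect (exists2 d, face d = f & c \in sigma_edge d) (c \in sigma_dual f).
Proof.
apply: (iffP bigcupP) => [[d /andP[_ /eqP]]|[d fd cd]]; first by exists d.
by exists d; rewrite ?fd ?eqxx.
Qed.

Variable c : 'I_m.

Definition color_adj : rel V := fun x y =>
  [&& c \in sigma x, c \in sigma y & gadj tail alpha x y].

Definition dual_color_adj : rel {set D} := fun f g =>
  [&& f \in faces, g \in faces, c \in sigma_dual f, c \in sigma_dual g & dadj f g].

Lemma dual_color_connect_sym : connect_sym dual_color_adj.
Proof.
apply: sym_connect_sym => f g.
by rewrite /dual_color_adj dadj_sym andbCA (andbCA (c \in sigma_dual f)).
Qed.

Lemma face_colored_tail d : c \in sigma (tail d) -> c \in sigma_dual (face d).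
Proof. by move=> cd; apply: (subsetP (sigma_edge_sub_dual d)); rewrite inE cd. Qed.

Lemma face_colored_head d : c \in sigma (tail (alpha d)) -> c \in sigma_dual (face d).
Proof.
by move=> cd; apply: (subsetP (sigma_edge_sub_dual d)); rewrite inE cd orbT.
Qed.

Lemma dual_connect_cross d :
  c \in sigma (tail (alpha d)) -> connect dual_color_adj (face d) (face (alpha d)).
Proof.
move=> cd; apply: connect1.
rewrite /dual_color_adj !face_in_faces face_colored_head //.
by rewrite face_colored_tail ?alphaK ?dadj_face_alpha.
Qed.

Lemma dual_connect_rotate d :
  c \in sigma (tail d) -> connect dual_color_adj (face d) (face (rho d)).
Proof.
move=> cd; rewrite face_rho dual_color_connect_sym -{2}(alphaK d).
by apply: dual_connect_cross; rewrite alphaK.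
Qed.

Lemma dual_connect_at_vertex d e : c \in sigma (tail d) -> tail d = tail e ->
  connect dual_color_adj (face d) (face e).
Proof.
move=> cd /rho_around_vertex/iter_findex <-; elim: (findex _ _ _) => //= n IHn.
have tail_iter : tail (iter n rho d) = tail d.
  by elim: n {IHn} => //= n IHn; rewrite tail_rho.
by apply: connect_trans IHn (dual_connect_rotate _); rewrite tail_iter.
Qed.

Lemma dual_connect_along_path d e : c \in sigma (tail d) ->
  connect color_adj (tail d) (tail e) ->
  connect dual_color_adj (face d) (face e).
Proof.
move=> cd /connectP[p]; elim: p d cd => [|v p IHp] d cd /=.
  by move=> _ /esym/(dual_connect_at_vertex cd).
case/andP=> /and3P[_ cv /existsP[d' /andP[/eqP td' /eqP tad']]] path_p last_p.
apply: connect_trans (dual_connect_at_vertex cd (esym td')) _.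
apply: connect_trans (dual_connect_cross _) _; first by rewrite tad'.
by apply: IHp; rewrite ?tad'.
Qed.

Lemma dual_connect_colored_tail d : c \in sigma_edge d ->
  exists2 d', c \in sigma (tail d') & connect dual_color_adj (face d) (face d').
Proof.
rewrite inE => /orP[cd|cad]; first by exists d.
by exists (alpha d); last by apply: dual_connect_cross.
Qed.

End ColoredDual.

Theorem lemma3p3 (V D : finType) (tail : D -> V) (alpha : D -> D) (rho : {perm D})
  (m : nat) (sigma : V -> {set 'I_m}) :
  plane_map tail alpha rho ->
  color_connected tail alpha sigma ->
  dual_color_connected tail alpha rho sigma.
Proof.
case=> [[alphaK _ tail_rho rho_around] _ _ _] colconn c f g _ _.
move=> /sigma_dualP[d <- cd] /sigma_dualP[e <- ce].
have [d' cd' dd'] := dual_connect_colored_tail rho cd.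
have [e' ce' ee'] := dual_connect_colored_tail rho ce.
apply: connect_trans dd' _.
rewrite (dual_color_connect_sym tail rho sigma alphaK) in ee'.
apply: connect_trans ee'.
exact: (dual_connect_along_path alphaK tail_rho rho_around cd' (colconn c _ _ cd' ce')).
Qed.
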